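(* Let $f\colon X\to Y$ be a uniformly continuous map of uniform spaces all of whose fibers $f^{-1}(y)$ are complete. If $f$ generates the uniform structure on $Y$ and satisfies conditions C1 and C2, then $f$ is a generalized uniform covering map.
   Context: $f(E)=\{(f(x),f(y)):(x,y)\in E\}$; a surjection $f$ generates the uniform structure of its range if the sets $f(E)$ form a base of it. $R(X,E)$ is the Rips complex (vertex set $X$, simplices the finite $F$ with $F\times F\subset E$); $e(x,y)$ the edge-path. An $E$-chain $x_0,\dots,x_n$ ($(x_i,x_{i+1})\in E$) is regarded as the edge-path in $R(X,E)$. Paths $c,d$ in $R(X,E)$ with end-points in $X$ are $E$-homotopic if their initial points $x_c,x_d$ and terminal points $y_c,y_d$ satisfy $(x_c,x_d),(y_c,y_d)\in E$ and $c\simeq e(x_c,x_d)\ast d\ast e(y_d,y_c)$ rel. end-points in $R(X,E)$. A generalized path from $x$ to $y$ is a family $\{[c_E]\}_E$ of homotopy classes rel. end-points of paths from $x$ to $y$ in $R(X,E)$ with $c_F\simeq c_E$ in $R(X,E)$ for $F\subset E$; generalized paths $c,d$ are $F$-homotopic if $c_F$ is $F$-homotopic to $d_F$. $\widetilde f$ maps generalized paths of $X$ to those of $Y$ by $\widetilde f(c)_F=[f_E(c_E)]$, $E=f^{-1}(F)$, $f_E$ the induced simplicial map. A generalized uniform covering map is a function $f\colon X\to Y$ generating the uniform structure of $Y$ and satisfying: GP1: for every $x_0\in X$ every generalized path in $Y$ starting at $f(x_0)$ is $\widetilde f(d)$ for some generalized path $d$ starting at $x_0$; GP2: for every entourage $E$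 of $X$ there is an entourage $F$ such that any two generalized paths $\alpha,\beta$ in $X$ with common origin are $E$-homotopic if $\widetilde f(\alpha),\widetilde f(\beta)$ are $f(F)$-homotopic; C1 (chain lifting property): for every entourage $E$ of $X$ there is an entourage $F$ such that every $f(F)$-chain starting at $f(x_0)$ lifts to an $E$-chain starting at $x_0$; C2: for every entourage $E$ of $X$ there is an entourage $F$ such that any two $F$-chains $\alpha,\beta$ with common origin are $E$-homotopic if $f(\alpha),f(\beta)$ are $f(F)$-homotopic. *)

From Stdlib Require Import List Relations.
Import ListNotations.
Set Implicit Arguments.

Definition rel (X : Type) := X -> X -> Prop.

Definition rsub {X} (E F : rel X) : Prop := forall a b, E a b -> F a b.

Record UniformSpace := {
  carrier :> Type;
  ent : rel carrier -> Prop;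
  ent_full : ent (fun _ _ => True);
  ent_super : forall E F, ent E -> rsub E F -> ent F;
  ent_inter : forall E F, ent E -> ent F -> ent (fun a b => E a b /\ F a b);
  ent_refl : forall E, ent E -> forall a, E a a;
  ent_sym : forall E, ent E -> ent (fun a b => E b a);
  ent_comp : forall E, ent E ->
     exists F, ent F /\ forall a b c, F a b -> F b c -> E a c
}.

Definition img {X Y} (f : X -> Y) (E : rel X) : rel Y :=
  fun u v => exists a b, E a b /\ f a = u /\ f b = v.
Definition preimg {X Y} (f : X -> Y) (F : rel Y) : rel X :=
  fun a b => F (f a) (f b).

Definition unif_continuous {X Y : UniformSpace} (f : X -> Y) : Prop :=
  forall G, ent Y G -> ent X (preimg f G).

Definition generates_unif {X Y : UniformSpace} (f : X -> Y) : Prop :=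
  (forall y : Y, exists x : X, f x = y) /\
  (forall E, ent X E -> ent Y (img f E)) /\
  (forall G, ent Y G -> exists E, ent X E /\ rsub (img f E) G).

Definition is_filter {X : Type} (Fl : (X -> Prop) -> Prop) : Prop :=
  Fl (fun _ => True) /\
  (forall A B : X -> Prop, Fl A -> (forall x, A x -> B x) -> Fl B) /\
  (forall A B, Fl A -> Fl B -> Fl (fun x => A x /\ B x)) /\
  (forall A, Fl A -> exists x, A x).

Definition cauchy_filter (X : UniformSpace) (Fl : (X -> Prop) -> Prop) : Prop :=
  is_filter Fl /\
  forall E, ent X E -> exists A, Fl A /\ forall a b, A a -> A b -> E a b.

(** S is complete: every Cauchy filter on S (i.e. a Cauchy filter on X
    containing S, = the trace filter) converges to a point of S. *)
Definition complete_subset (X : UniformSpace) (S : X -> Prop) : Prop :=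
  forall Fl : (X -> Prop) -> Prop, cauchy_filter X Fl -> Fl S ->
    exists x, S x /\ forall E, ent X E -> Fl (fun z => E x z).

Inductive chain {X : Type} (R : rel X) : list X -> Prop :=
| chain_one : forall x, chain R [x]
| chain_cons : forall x y l, R x y -> chain R (y :: l) -> chain R (x :: y :: l).

(** a finite set F (given as a list) is a simplex of R(X,E) iff F x F ⊂ E *)
Definition simplex {X} (E : rel X) (F : list X) : Prop :=
  forall a b, In a F -> In b F -> E a b.

Definition edge_path {X} (E : rel X) (c : list X) : Prop :=
  chain (fun a b => simplex E [a; b]) c.

Definition path_ft {X} (E : rel X) (c : list X) (x y : X) : Prop :=
  edge_path E c /\ hd_error c = Some x /\ last c x = y.

Inductive emove {X} (E : rel X) : list X -> list X -> Prop :=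
| em_dup : forall l1 v l2, emove E (l1 ++ v :: v :: l2) (l1 ++ v :: l2)
| em_tri : forall l1 u v w l2, simplex E [u; v; w] ->
    emove E (l1 ++ u :: v :: w :: l2) (l1 ++ u :: w :: l2).

Definition ehom {X} (E : rel X) (c d : list X) : Prop :=
  edge_path E c /\ edge_path E d /\ clos_refl_sym_trans _ (emove E) c d.

(** E-homotopy of paths: c ≃ e(x_c,x_d) * d * e(y_d,y_c) rel end-points *)
Definition Ehomotopic {X} (E : rel X) (c d : list X) : Prop :=
  exists xc xd : X,
    hd_error c = Some xc /\ hd_error d = Some xd /\
    E xc xd /\ E (last c xc) (last d xd) /\
    ehom E c (xc :: d ++ [last c xc]).

Definition gpath (X : UniformSpace) (c : rel X -> list X) (x y : X) : Prop :=
  (forall E, ent X E -> path_ft E (c E) x y) /\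
  (forall E F, ent X E -> ent X F -> rsub F E -> ehom E (c F) (c E)).

Definition gpeq (Y : UniformSpace) (c d : rel Y -> list Y) : Prop :=
  forall F, ent Y F -> ehom F (c F) (d F).

Definition ftilde {X Y : Type} (f : X -> Y) (d : rel X -> list X) : rel Y -> list Y :=
  fun F => map f (d (preimg f F)).

Definition GP1 {X Y : UniformSpace} (f : X -> Y) : Prop :=
  forall (x0 : X) (y : Y) (c : rel Y -> list Y), gpath Y c (f x0) y ->
    exists (x : X) (d : rel X -> list X), gpath X d x0 x /\ gpeq Y c (ftilde f d).

Definition GP2 {X Y : UniformSpace} (f : X -> Y) : Prop :=
  forall E, ent X E -> exists F, ent X F /\
    forall (x0 y1 y2 : X) (a b : rel X -> list X),
      gpath X a x0 y1 -> gpath X b x0 y2 ->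
      Ehomotopic (img f F) (ftilde f a (img f F)) (ftilde f b (img f F)) ->
      Ehomotopic E (a E) (b E).

Definition C1 {X Y : UniformSpace} (f : X -> Y) : Prop :=
  forall E, ent X E -> exists F, ent X F /\
    forall (x0 : X) (ys : list Y), chain (img f F) ys -> hd_error ys = Some (f x0) ->
      exists xs : list X, chain E xs /\ hd_error xs = Some x0 /\ map f xs = ys.

Definition C2 {X Y : UniformSpace} (f : X -> Y) : Prop :=
  forall E, ent X E -> exists F, ent X F /\
    forall (x0 : X) (a b : list X), chain F a -> chain F b ->
      hd_error a = Some x0 -> hd_error b = Some x0 ->
      Ehomotopic (img f F) (map f a) (map f b) -> Ehomotopic E a b.

Definition gen_unif_covering {X Y : UniformSpace} (f : X -> Y) : Prop :=
  generates_unif f /\ GP1 f /\ GP2 f /\ C1 f /\ C2 f.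

(* GP2 reduces to C2: compatibility lets one replace the images at f(F) of two
   generalized paths a, b by the images of the chains a_F, b_F, to which C2
   applies, and transports the conclusion back to a_E, b_E.
   For GP1, lift the paths c_{f(F)} of a generalized path in Y by C1 to chains
   starting at x0.  By C2, lifts at fine entourages are E-homotopic, so their
   end points, which lie in the fibre over the terminal point y, form a Cauchy
   filter.  Its limit x in the complete fibre closes every lift into a path
   ending at x; two closed lifts are homotopic rel. end-points because their
   last vertices and x span a simplex (a triangle move). *)

From Stdlib Require Import List Relations ClassicalEpsilon.
Import ListNotations.

Lemma chain_mono {X} (R S : rel X) l : rsub R S -> chain R l -> chain S l.
Proof. intros H C; induction C; constructor; auto. Qed.

Lemma chain_nonempty {X} (R : rel X) l : chain R l -> l <> [].
Proof. destruct 1; discriminate. Qed.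

Lemma chain_app {X} (R : rel X) l1 l2 d : l1 <> [] -> l2 <> [] ->
  chain R (l1 ++ l2) <-> chain R l1 /\ chain R l2 /\ R (last l1 d) (hd d l2).
Proof.
  intros H1 H2. induction l1 as [|a l1 IH]; [congruence|].
  destruct l1 as [|b l1].
  - destruct l2 as [|c l2]; [congruence|]. simpl. split.
    + intro C; inversion C; subst. repeat split; auto. constructor.
    + intros [_ [C R']]. constructor; auto.
  - specialize (IH ltac:(discriminate)).
    change ((a :: b :: l1) ++ l2) with (a :: (b :: l1) ++ l2).
    change (last (a :: b :: l1) d) with (last (b :: l1) d).
    split.
    + intro C; inversion C as [|? ? ? Hab Crest]; subst.
      apply IH in Crest as [Ca [Cb Cr]]. repeat split; auto. constructor; auto.
    + intros [Ca [Cb Cr]]. inversion Ca; subst. constructor; auto. apply IH; auto.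
Qed.

Lemma chain_map {X Y} (f : X -> Y) (R : rel Y) l : chain (preimg f R) l -> chain R (map f l).
Proof. intro C; induction C; constructor; auto. Qed.

Lemma last_app_nonempty {X} (l1 l2 : list X) z : l2 <> [] -> last (l1 ++ l2) z = last l2 z.
Proof.
  intro H. induction l1 as [|a l1 IH]; auto. simpl.
  destruct (l1 ++ l2) eqn:E; [apply app_eq_nil in E; tauto|]. rewrite <- IH. reflexivity.
Qed.

Lemma hd_error_app_nonempty {X} (l1 l2 : list X) : l1 <> [] -> hd_error (l1 ++ l2) = hd_error l1.
Proof. destruct l1; [congruence|reflexivity]. Qed.

Lemma map_last {X Y} (f : X -> Y) l z : f (last l z) = last (map f l) (f z).
Proof. induction l as [|a l IH]; auto. simpl. destruct l; auto. Qed.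

Definition symr {X} (E : rel X) : rel X := fun a b => E a b /\ E b a.
Definition inter {X} (E F : rel X) : rel X := fun a b => E a b /\ F a b.

Lemma symr_refl {X} (E : rel X) u : (forall u, E u u) -> symr E u u.
Proof. split; auto. Qed.

Lemma simplex_incl {X} (E : rel X) l l' : simplex E l -> incl l' l -> simplex E l'.
Proof. intros H I a b Ha Hb; apply H; auto. Qed.

Lemma simplex_mono {X} (E F : rel X) l : rsub E F -> simplex E l -> simplex F l.
Proof. intros H S a b Ha Hb; apply H, S; auto. Qed.

Lemma simplex_map {X Y} (f : X -> Y) (E : rel X) l :
  simplex E l -> simplex (img f E) (map f l).
Proof.
  intros H u v Hu Hv. apply in_map_iff in Hu as [a [<- Ha]].
  apply in_map_iff in Hv as [b [<- Hb]]. exists a, b; auto.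
Qed.

Lemma simplex_pair {X} (E : rel X) a b : (forall u, E u u) -> symr E a b -> simplex E [a; b].
Proof.
  intros Hr [H1 H2] u v Hu Hv; simpl in *.
  destruct Hu as [<-|[<-|[]]]; destruct Hv as [<-|[<-|[]]]; auto.
Qed.

Lemma simplex_triple {X} (E E4 : rel X) p q x : (forall u, E u u) -> (forall u, E4 u u) ->
  (forall a b c, E4 a b -> E4 b c -> E a c) ->
  symr E4 x p -> symr E4 x q -> simplex E [p; q; x].
Proof.
  intros Hr Hr4 Hc [H1 H2] [H3 H4] u v Hu Hv; simpl in *.
  destruct Hu as [<-|[<-|[<-|[]]]]; destruct Hv as [<-|[<-|[<-|[]]]]; eauto.
Qed.

Lemma edge_path_mono {X} (E F : rel X) l : rsub E F -> edge_path E l -> edge_path F l.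
Proof. intro H; apply chain_mono; intros a b; apply simplex_mono; auto. Qed.

Lemma edge_path_chain {X} (E : rel X) l : edge_path E l -> chain E l.
Proof. apply chain_mono. intros a b S; apply S; simpl; auto. Qed.

Lemma chain_symr_edge_path {X} (E : rel X) l : (forall u, E u u) ->
  chain (symr E) l -> edge_path E l.
Proof. intro Hr; apply chain_mono; intros a b; apply simplex_pair; auto. Qed.

Lemma edge_path_map {X Y} (f : X -> Y) (E : rel X) l :
  edge_path E l -> edge_path (img f E) (map f l).
Proof.
  intro H. apply chain_map. eapply chain_mono; [|exact H].
  intros a b S. exact (simplex_map f _ _ S).
Qed.

Lemma edge_path_snoc {X} (E : rel X) l z d : edge_path E l -> simplex E [last l d; z] ->
  edge_path E (l ++ [z]).
Proof.
  intros H S. apply (chain_app _ _ _ d); [exact (chain_nonempty _ _ H)|discriminate|].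
  repeat split; auto. constructor.
Qed.

Lemma edge_path_cons2 {X} (E : rel X) x a l :
  edge_path E (x :: a :: l) <-> simplex E [x; a] /\ edge_path E (a :: l).
Proof.
  split; [intro C; inversion C; auto|intros [S C]; constructor; auto].
Qed.

Lemma edge_path_framed {X} (E : rel X) x l z : l <> [] ->
  edge_path E (x :: l ++ [z]) <->
  simplex E [x; hd x l] /\ edge_path E l /\ simplex E [last l x; z].
Proof.
  intro Hn. destruct l as [|a l]; [congruence|].
  change (x :: (a :: l) ++ [z]) with (x :: a :: l ++ [z]).
  rewrite edge_path_cons2. change (a :: l ++ [z]) with ((a :: l) ++ [z]).
  unfold edge_path. rewrite (chain_app _ _ _ x Hn) by discriminate.
  simpl. split; [intros [S [C [_ T]]]|intros [S [C T]]]; repeat split; auto. constructor.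
Qed.

Definition emoves {X} (E : rel X) : list X -> list X -> Prop :=
  clos_refl_sym_trans _ (emove E).

Lemma emoves_lift {X Y} (E : rel X) (F : rel Y) (g : list X -> list Y) m m' :
  (forall m m', emove E m m' -> emove F (g m) (g m')) ->
  emoves E m m' -> emoves F (g m) (g m').
Proof.
  intros Hg; induction 1.
  - apply rst_step, Hg; auto.
  - apply rst_refl.
  - apply rst_sym; auto.
  - eapply rst_trans; eauto.
Qed.

Lemma emoves_invariant {X A} (E : rel X) (h : list X -> A) m m' :
  (forall m m', emove E m m' -> h m = h m') -> emoves E m m' -> h m = h m'.
Proof. intro Hh; induction 1; auto; congruence. Qed.

Lemma emove_frame {X} (E : rel X) p s m m' :
  emove E m m' -> emove E (p ++ m ++ s) (p ++ m' ++ s).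
Proof.
  destruct 1 as [l1 v l2|l1 u v w l2 S].
  - replace (p ++ (l1 ++ v :: v :: l2) ++ s) with ((p ++ l1) ++ v :: v :: l2 ++ s)
      by (rewrite <- !app_assoc; reflexivity).
    replace (p ++ (l1 ++ v :: l2) ++ s) with ((p ++ l1) ++ v :: l2 ++ s)
      by (rewrite <- !app_assoc; reflexivity).
    constructor.
  - replace (p ++ (l1 ++ u :: v :: w :: l2) ++ s) with ((p ++ l1) ++ u :: v :: w :: l2 ++ s)
      by (rewrite <- !app_assoc; reflexivity).
    replace (p ++ (l1 ++ u :: w :: l2) ++ s) with ((p ++ l1) ++ u :: w :: l2 ++ s)
      by (rewrite <- !app_assoc; reflexivity).
    constructor; auto.
Qed.

Lemma emove_mono {X} (E F : rel X) m m' : rsub E F -> emove E m m' -> emove F m m'.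
Proof. intro H; destruct 1; constructor; eapply simplex_mono; eauto. Qed.

Lemma emove_map {X Y} (f : X -> Y) (E : rel X) m m' :
  emove E m m' -> emove (img f E) (map f m) (map f m').
Proof.
  destruct 1 as [l1 v l2|l1 u v w l2 S]; rewrite !map_app; constructor.
  exact (simplex_map f _ _ S).
Qed.

Lemma emove_hd_error {X} (E : rel X) m m' : emove E m m' -> hd_error m = hd_error m'.
Proof. destruct 1 as [l1|l1]; destruct l1; reflexivity. Qed.

Lemma emove_last {X} (E : rel X) z m m' : emove E m m' -> last m z = last m' z.
Proof. destruct 1; rewrite !last_app_nonempty by discriminate; reflexivity. Qed.

Lemma emoves_hd_error {X} (E : rel X) m m' : emoves E m m' -> hd_error m = hd_error m'.
Proof. apply emoves_invariant, emove_hd_error. Qed.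

Lemma emoves_last {X} (E : rel X) z m m' : emoves E m m' -> last m z = last m' z.
Proof. apply (emoves_invariant E (fun m => last m z)), emove_last. Qed.

Lemma ehom_sym {X} (E : rel X) c d : ehom E c d -> ehom E d c.
Proof. intros [A [B C]]; repeat split; auto. apply rst_sym; auto. Qed.

Lemma ehom_trans {X} (E : rel X) c d e : ehom E c d -> ehom E d e -> ehom E c e.
Proof. intros [A [B C]] [_ [B' C']]; repeat split; auto. eapply rst_trans; eauto. Qed.

Lemma ehom_mono {X} (E F : rel X) c d : rsub E F -> ehom E c d -> ehom F c d.
Proof.
  intros H [A [B C]]; repeat split; try (eapply edge_path_mono; eauto).
  apply (emoves_lift E F id); auto. intros; apply emove_mono with E; auto.
Qed.

Lemma ehom_map {X Y} (f : X -> Y) (E : rel X) c d :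
  ehom E c d -> ehom (img f E) (map f c) (map f d).
Proof.
  intros [A [B C]]; repeat split; try apply edge_path_map; auto.
  apply (emoves_lift E _ (map f)); auto. apply emove_map.
Qed.

Lemma ehom_snoc_last {X} (E : rel X) c z : (forall u, E u u) -> edge_path E c ->
  ehom E c (c ++ [last c z]).
Proof.
  intros Hr H. assert (Hn := chain_nonempty _ _ H).
  split; [auto|split].
  - apply edge_path_snoc with z; auto. apply simplex_pair, symr_refl; auto.
  - apply rst_sym, rst_step. pose proof (app_removelast_last z Hn) as Hc.
    remember (last c z) as w. rewrite Hc, <- app_assoc. apply (em_dup E _ _ []).
Qed.

Lemma ehom_cons_hd {X} (E : rel X) c x : (forall u, E u u) -> edge_path E c ->
  hd_error c = Some x -> ehom E c (x :: c).
Proof.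
  intros Hr H Hh. destruct c as [|a c]; [discriminate|]. injection Hh as ->.
  split; [auto|split].
  - constructor; auto. apply simplex_pair, symr_refl; auto.
  - apply rst_sym, rst_step, (em_dup E [] x c).
Qed.

(* Homotopy rel. end-points is a special case of [E]-homotopy, with both
   connecting edges degenerate. *)
Lemma ehom_Ehomotopic {X} (E : rel X) c d x : (forall u, E u u) -> ehom E c d ->
  hd_error c = Some x -> Ehomotopic E c d.
Proof.
  intros Hr H Hh. pose proof H as [Hc [Hd R]].
  assert (Hdh : hd_error d = Some x) by (rewrite <- (emoves_hd_error _ _ _ R); auto).
  assert (Hl : last c x = last d x) by exact (emoves_last _ x _ _ R).
  exists x, x. rewrite Hl. do 4 (split; [auto|]).
  apply ehom_trans with d; auto.
  apply ehom_trans with (d ++ [last d x]); [apply ehom_snoc_last; auto|].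
  apply (ehom_cons_hd E _ x); auto.
  - apply edge_path_snoc with x; auto. apply simplex_pair, symr_refl; auto.
  - rewrite hd_error_app_nonempty; auto. exact (chain_nonempty _ _ Hd).
Qed.

Lemma emove_drop_vertex {X} (E : rel X) x b y z : b <> [] ->
  simplex E [last b x; y; z] -> emove E (x :: b ++ [y; z]) (x :: b ++ [z]).
Proof.
  intros Hn S. destruct (exists_last Hn) as [r [lb ->]]. rewrite last_last in S.
  rewrite <- !app_assoc. exact (em_tri (x :: r) [] S).
Qed.

(* Appending a common end point [z] to two E-homotopic paths: the triangle
   [last b, last a, z] absorbs the connecting edge [e(last b, last a)]. *)
Lemma Ehomotopic_snoc {X} (E : rel X) a b x0 z : Ehomotopic E a b ->
  hd_error a = Some x0 -> hd_error b = Some x0 ->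
  simplex E [last b x0; last a x0; z] -> ehom E (a ++ [z]) (b ++ [z]).
Proof.
  intros [xc [xd [ha [hb [_ [_ [Ea [Eb R]]]]]]]] Ha Hb S.
  rewrite Ha in ha; injection ha as <-. rewrite Hb in hb; injection hb as <-.
  assert (Hnb : b <> []) by (destruct b; discriminate).
  apply edge_path_framed in Eb as [_ [Eb _]]; auto.
  split; [|split].
  - apply edge_path_snoc with x0; auto. eapply simplex_incl; [exact S|]. intro; simpl; tauto.
  - apply edge_path_snoc with x0; auto. eapply simplex_incl; [exact S|]. intro; simpl; tauto.
  - eapply rst_trans; [apply (emoves_lift E E (fun m => [] ++ m ++ [z])); [|exact R]|].
    { intros; apply emove_frame; auto. }
    simpl. rewrite <- app_assoc. simpl.
    eapply rst_trans; [apply rst_step, emove_drop_vertex; auto|].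
    destruct b as [|b0 b]; [congruence|]. injection Hb as ->.
    apply rst_step, (em_dup E [] x0 (b ++ [z])).
Qed.

Lemma Ehomotopic_ehom {X} (E : rel X) c d c' d' : Ehomotopic E c d ->
  ehom E c c' -> ehom E d d' -> Ehomotopic E c' d'.
Proof.
  intros [xc [xd [hc [hd [Exy [El [_ [Ep R]]]]]]]] [Ec [Ec' Rc]] [Ed [Ed' Rd]].
  assert (Hnd := chain_nonempty _ _ Ed).
  assert (Hd := emoves_hd_error _ _ _ Rd).
  assert (Lc : last c xc = last c' xc) by exact (emoves_last _ _ _ _ Rc).
  assert (Ld : forall z, last d z = last d' z) by (intro; exact (emoves_last _ _ _ _ Rd)).
  exists xc, xd. rewrite <- (emoves_hd_error _ _ _ Rc), <- Hd, <- Lc, <- Ld.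
  repeat split; auto.
  - apply edge_path_framed in Ep as [S1 [_ S2]]; auto.
    apply edge_path_framed; [exact (chain_nonempty _ _ Ed')|].
    rewrite <- Ld. repeat split; auto.
    destruct d as [|a d]; [congruence|].
    destruct d' as [|a' d']; simpl in Hd; [discriminate|]. injection Hd as <-. exact S1.
  - eapply rst_trans; [apply rst_sym, Rc|]. eapply rst_trans; [exact R|].
    apply (emoves_lift E E (fun m => [xc] ++ m ++ [last c xc])); auto.
    intros; apply emove_frame; auto.
Qed.

Lemma Ehomotopic_mono {X} (E F : rel X) c d : rsub E F -> Ehomotopic E c d -> Ehomotopic F c d.
Proof.
  intros H [xc [xd [a [b [e [l h]]]]]]. exists xc, xd.
  do 4 (split; [auto|]). apply ehom_mono with E; auto.
Qed.

Lemma ent_symr (X : UniformSpace) (E : rel X) : ent X E -> ent X (symr E).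
Proof. intro H. exact (ent_inter X E _ H (ent_sym X E H)). Qed.

Lemma ent_int (X : UniformSpace) (E F : rel X) : ent X E -> ent X F -> ent X (inter E F).
Proof. apply ent_inter. Qed.

Lemma img_mono {X Y} (f : X -> Y) (A B : rel X) : rsub A B -> rsub (img f A) (img f B).
Proof. intros H u v [p [q [h [<- <-]]]]. exists p, q; auto. Qed.

Lemma GP2_of_C2 (X Y : UniformSpace) (f : X -> Y) :
  (forall E, ent X E -> ent Y (img f E)) -> C2 f -> GP2 f.
Proof.
  intros img_ent HC2 E HE. destruct (HC2 E HE) as [F2 [HF2 P2]].
  set (F := inter F2 E). assert (HF : ent X F) by (apply ent_int; auto).
  exists F. split; [exact HF|].
  intros x0 y1 y2 a b [Ha1 Ha2] [Hb1 Hb2] H.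
  set (F' := preimg f (img f F)).
  assert (HFF' : rsub F F') by (intros u v h; exists u, v; auto).
  assert (HF' : ent X F') by (eapply ent_super; eauto).
  assert (Hsub : rsub (img f F') (img f F)) by (intros u v [p [q [h [<- <-]]]]; exact h).
  assert (Hfa : ehom (img f F) (map f (a F')) (map f (a F))).
  { apply ehom_sym, (ehom_mono _ _ _ _ Hsub), ehom_map, Ha2; auto. }
  assert (Hfb : ehom (img f F) (map f (b F')) (map f (b F))).
  { apply ehom_sym, (ehom_mono _ _ _ _ Hsub), ehom_map, Hb2; auto. }
  assert (HfF : Ehomotopic (img f F) (map f (a F)) (map f (b F)))
    by exact (Ehomotopic_ehom _ _ _ _ _ H Hfa Hfb).
  destruct (Ha1 F HF) as [EaF [haF _]]. destruct (Hb1 F HF) as [EbF [hbF _]].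
  assert (HF2sub : rsub F F2) by (intros u v [h _]; exact h).
  assert (HFE : Ehomotopic E (a F) (b F)).
  { apply (P2 x0); auto.
    - eapply chain_mono; [exact HF2sub|apply edge_path_chain, EaF].
    - eapply chain_mono; [exact HF2sub|apply edge_path_chain, EbF].
    - eapply Ehomotopic_mono; [apply img_mono, HF2sub|exact HfF]. }
  assert (HFsub : rsub F E) by (intros u v [_ h]; exact h).
  exact (Ehomotopic_ehom _ _ _ _ _ HFE (Ha2 E F HE HF HFsub) (Hb2 E F HE HF HFsub)).
Qed.

Section LiftGeneralizedPath.

Variables (X Y : UniformSpace) (f : X -> Y).
Hypothesis f_unif : unif_continuous f.
Hypothesis img_ent : forall E, ent X E -> ent Y (img f E).
Hypothesis HC1 : C1 f.
Hypothesis HC2 : C2 f.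
Variables (x0 : X) (y : Y) (c : rel Y -> list Y).
Hypothesis Hc : gpath Y c (f x0) y.

(* C1 is applied to [symr E] so that the lifted chain is an edge path of R(X,E). *)
Definition lift_spec (E : rel X) (xs : list X) : Prop :=
  exists F, ent X F /\ rsub F E /\ chain (symr E) xs /\ hd_error xs = Some x0 /\
    map f xs = c (img f F).

Lemma lift_spec_exists E : ent X E -> exists xs, lift_spec E xs.
Proof.
  intro HE. destruct (HC1 (symr E) (ent_symr _ _ HE)) as [F1 [HF1 P1]].
  set (F := inter F1 E). assert (HF : ent X F) by (apply ent_int; auto).
  destruct (proj1 Hc (img f F) (img_ent F HF)) as [Ep [Hh _]].
  destruct (P1 x0 (c (img f F))) as [xs [Cx [Hx Mx]]]; auto.
  - eapply chain_mono; [|apply edge_path_chain, Ep].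
    apply img_mono. intros u v [h _]; exact h.
  - exists xs, F. split; [exact HF|split; [intros u v [_ h]; exact h|auto]].
Qed.

Definition lift (E : rel X) : list X := epsilon (inhabits (@nil X)) (lift_spec E).

Lemma lift_spec_lift E : ent X E -> lift_spec E (lift E).
Proof. intro HE; unfold lift; apply epsilon_spec, lift_spec_exists, HE. Qed.

Definition endpoint (E : rel X) : X := last (lift E) x0.

Lemma lift_edge_path E : ent X E -> edge_path E (lift E).
Proof.
  intro HE. destruct (lift_spec_lift E HE) as [F [_ [_ [Ch _]]]].
  apply chain_symr_edge_path; auto. apply ent_refl, HE.
Qed.

Lemma lift_hd_error E : ent X E -> hd_error (lift E) = Some x0.
Proof. intro HE. destruct (lift_spec_lift E HE) as [F [_ [_ [_ [H _]]]]]; exact H. Qed.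

Lemma endpoint_fiber E : ent X E -> f (endpoint E) = y.
Proof.
  intro HE. destruct (lift_spec_lift E HE) as [F [HF [_ [_ [_ M]]]]].
  unfold endpoint. rewrite map_last, M. apply (proj1 Hc _ (img_ent F HF)).
Qed.

Lemma lifts_Ehomotopic E : ent X E -> exists F2, ent X F2 /\ rsub F2 E /\
  forall E1 E2, ent X E1 -> ent X E2 -> rsub E1 F2 -> rsub E2 F2 ->
    Ehomotopic E (lift E1) (lift E2).
Proof.
  intro HE. destruct (HC2 E HE) as [F2 [HF2 P2]].
  exists (inter F2 E). split; [apply ent_int; auto|split; [intros u v [_ h]; exact h|]].
  intros E1 E2 HE1 HE2 s1 s2.
  destruct (lift_spec_lift E1 HE1) as [G1 [HG1 [sG1 [Ch1 [H1 M1]]]]].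
  destruct (lift_spec_lift E2 HE2) as [G2 [HG2 [sG2 [Ch2 [H2 M2]]]]].
  apply (P2 x0); auto.
  - eapply chain_mono; [|exact Ch1]. intros u v [h _]. exact (proj1 (s1 u v h)).
  - eapply chain_mono; [|exact Ch2]. intros u v [h _]. exact (proj1 (s2 u v h)).
  - rewrite M1, M2. apply (ehom_Ehomotopic _ _ _ (f x0)).
    + apply ent_refl, img_ent, HF2.
    + apply ehom_trans with (c (img f F2)); [|apply ehom_sym];
        apply (proj2 Hc); auto; apply img_mono; intros u v h.
      * exact (proj1 (s1 u v (sG1 u v h))).
      * exact (proj1 (s2 u v (sG2 u v h))).
    + apply (proj1 Hc _ (img_ent G1 HG1)).
Qed.

Definition endpoint_filter (A : X -> Prop) : Prop :=
  exists E', ent X E' /\ forall E, ent X E -> rsub E E' -> A (endpoint E).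

(* Endpoints of lifts at fine entourages are close because the lifts are
   E-homotopic, and E-homotopic paths from [x0] have E-close end points. *)
Lemma endpoint_filter_cauchy : cauchy_filter X endpoint_filter.
Proof.
  split.
  - split; [|split; [|split]].
    + exists (fun _ _ => True). split; [apply ent_full|auto].
    + intros A B [E' [HE' P]] HAB. exists E'; split; auto.
    + intros A B [E' [HE' P]] [E'' [HE'' P']]. exists (inter E' E'').
      split; [apply ent_int; auto|].
      intros E HE s. split; [apply P|apply P']; auto; intros u v h; apply (s u v h).
    + intros A [E' [HE' P]]. exists (endpoint E'). apply P; auto. intros u v h; exact h.
  - intros E HE. destruct (lifts_Ehomotopic E HE) as [F2 [HF2 [_ P]]].
    exists (fun z => exists E1, ent X E1 /\ rsub E1 F2 /\ z = endpoint E1). split.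
    + exists F2. split; auto. intros E1 h s. exists E1; auto.
    + intros a b [E1 [HE1 [s1 ->]]] [E2 [HE2 [s2 ->]]].
      destruct (P E1 E2 HE1 HE2 s1 s2) as [xc [xd [hc [hd [_ [El _]]]]]].
      rewrite lift_hd_error in hc, hd by auto.
      injection hc as <-. injection hd as <-. exact El.
Qed.

Lemma endpoint_filter_fiber : endpoint_filter (fun z => f z = y).
Proof.
  exists (fun _ _ => True). split; [apply ent_full|].
  intros E HE _. apply endpoint_fiber, HE.
Qed.

Section ClosedLift.

Variable x : X.
Hypothesis x_fiber : f x = y.
Hypothesis x_limit : forall E, ent X E -> endpoint_filter (fun z => E x z).

Definition lift_modulus (E K : rel X) : Prop :=
  ent X K /\ rsub K E /\ forall E1 E2, ent X E1 -> ent X E2 -> rsub E1 K -> rsub E2 K ->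
    Ehomotopic E (lift E1) (lift E2) /\ simplex E [endpoint E1; endpoint E2; x].

Lemma lift_modulus_exists E : ent X E -> exists K, lift_modulus E K.
Proof.
  intro HE. destruct (lifts_Ehomotopic E HE) as [F2 [HF2 [_ P]]].
  destruct (ent_comp X E HE) as [E4 [HE4 Hc4]].
  destruct (x_limit (symr E4) (ent_symr _ _ HE4)) as [E' [HE' PE']].
  exists (inter F2 (inter E' E)).
  split; [repeat apply ent_int; auto|split; [intros u v [_ [_ h]]; exact h|]].
  intros E1 E2 HE1 HE2 s1 s2. split.
  - apply P; auto; intros u v h; [exact (proj1 (s1 u v h))|exact (proj1 (s2 u v h))].
  - apply (simplex_triple E E4); [apply ent_refl, HE|apply ent_refl, HE4|exact Hc4| |].
    + exact (PE' E1 HE1 (fun u v h => proj1 (proj2 (s1 u v h)))).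
    + exact (PE' E2 HE2 (fun u v h => proj1 (proj2 (s2 u v h)))).
Qed.

Definition modulus (E : rel X) : rel X := epsilon (inhabits E) (lift_modulus E).

Lemma lift_modulus_modulus E : ent X E -> lift_modulus E (modulus E).
Proof. intro HE; unfold modulus; apply epsilon_spec, lift_modulus_exists, HE. Qed.

Definition closed_lift (E : rel X) : list X := lift (modulus E) ++ [x].

Lemma closed_lift_path_ft E : ent X E -> path_ft E (closed_lift E) x0 x.
Proof.
  intro HE. destruct (lift_modulus_modulus E HE) as [HK [sK PK]].
  destruct (PK _ _ HK HK (fun _ _ h => h) (fun _ _ h => h)) as [_ S].
  assert (Hep := lift_edge_path _ HK).
  split; [|split].
  - apply edge_path_snoc with x0; [eapply edge_path_mono; eauto|].
    eapply simplex_incl; [exact S|]. intro; simpl; tauto.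
  - unfold closed_lift. rewrite hd_error_app_nonempty; [|exact (chain_nonempty _ _ Hep)].
    apply lift_hd_error, HK.
  - apply last_last.
Qed.

Lemma closed_lift_compat E F : ent X E -> ent X F -> rsub F E ->
  ehom E (closed_lift F) (closed_lift E).
Proof.
  intros HE HF sFE.
  destruct (lift_modulus_modulus E HE) as [HKE [_ PKE]].
  destruct (lift_modulus_modulus F HF) as [HKF [_ PKF]].
  set (M := inter (modulus E) (modulus F)).
  assert (HM : ent X M) by (apply ent_int; auto).
  assert (HME : ehom E (lift M ++ [x]) (closed_lift E)).
  { destruct (PKE M (modulus E) HM HKE (fun _ _ h => proj1 h) (fun _ _ h => h)) as [H _].
    destruct (PKE (modulus E) M HKE HM (fun _ _ h => h) (fun _ _ h => proj1 h)) as [_ S].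
    apply Ehomotopic_snoc with x0; auto using lift_hd_error. }
  assert (HMF : ehom F (lift M ++ [x]) (closed_lift F)).
  { destruct (PKF M (modulus F) HM HKF (fun _ _ h => proj2 h) (fun _ _ h => h)) as [H _].
    destruct (PKF (modulus F) M HKF HM (fun _ _ h => h) (fun _ _ h => proj2 h)) as [_ S].
    apply Ehomotopic_snoc with x0; auto using lift_hd_error. }
  apply ehom_trans with (lift M ++ [x]); [|exact HME].
  apply ehom_sym, (ehom_mono F E); auto.
Qed.

Lemma closed_lift_gpath : gpath X closed_lift x0 x.
Proof. split; [exact closed_lift_path_ft|exact closed_lift_compat]. Qed.

Lemma closed_lift_covers : gpeq Y c (ftilde f closed_lift).
Proof.
  intros G HG. set (P := preimg f G). assert (HP : ent X P) by (apply f_unif; auto).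
  unfold ftilde, closed_lift. fold P.
  destruct (lift_modulus_modulus P HP) as [HKP [sKP _]].
  destruct (lift_spec_lift (modulus P) HKP) as [F [HF [sF [_ [_ M]]]]].
  rewrite map_app, M. simpl. rewrite x_fiber.
  assert (HcF : ehom G (c (img f F)) (c G)).
  { apply (proj2 Hc); auto. intros u v [p [q [h [<- <-]]]]. exact (sKP p q (sF p q h)). }
  destruct (proj1 Hc _ (img_ent F HF)) as [_ [_ Hl]].
  apply ehom_trans with (c (img f F)); [apply ehom_sym, HcF|].
  rewrite <- Hl. apply ehom_snoc_last; [apply ent_refl, HG|apply HcF].
Qed.

End ClosedLift.

Lemma lift_generalized_path : complete_subset X (fun z => f z = y) ->
  exists x d, gpath X d x0 x /\ gpeq Y c (ftilde f d).
Proof.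
  intro Hcomp.
  destruct (Hcomp _ endpoint_filter_cauchy endpoint_filter_fiber) as [x [Hx Hlim]].
  exists x, (closed_lift x). split.
  - apply closed_lift_gpath, Hlim.
  - apply closed_lift_covers; auto.
Qed.

End LiftGeneralizedPath.

Lemma GP1_of_C1_C2 (X Y : UniformSpace) (f : X -> Y) :
  unif_continuous f -> (forall y : Y, complete_subset X (fun x => f x = y)) ->
  (forall E, ent X E -> ent Y (img f E)) -> C1 f -> C2 f -> GP1 f.
Proof.
  intros Huc Hcomp img_ent HC1 HC2 x0 y c Hc.
  eapply lift_generalized_path; eauto.
Qed.

Theorem mainTheorem13 (X Y : UniformSpace) (f : X -> Y) :
  unif_continuous f ->
  (forall y : Y, complete_subset X (fun x => f x = y)) ->
  generates_unif f -> C1 f -> C2 f ->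
  gen_unif_covering f.
Proof.
  intros Huc Hcomp Hgen HC1 HC2.
  pose proof (proj1 (proj2 Hgen)) as img_ent.
  split; [exact Hgen|]. split; [apply GP1_of_C1_C2; auto|].
  split; [apply GP2_of_C2; auto|]. split; assumption.
Qed.
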